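(* For every $\varepsilon>0$, with $\mathcal D_\varepsilon$ the value defined in the context, $\mathrm{ALG}\le\frac{2+\varepsilon}{\varepsilon}\,\mathcal D_\varepsilon$.
   Context: Network. $S,T,R,D$ are pairwise disjoint finite sets (sources, transmitters, receivers, destinations). Each transmitter $t\in T$ is attached to a source $s(t)\in S$ via a link of integer delay $d(s(t),t)\ge 0$; each receiver $r\in R$ is attached to a destination $d(r)\in D$ via a link of integer delay $d(r,d(r))\ge 0$. A set $E_R\subseteq T\times R$ of reconfigurable edges is given, each $e\in E_R$ with integer delay $d(e)\ge 1$. A set $E_\ell\subseteq S\times D$ of fixed links is given, each with integer delay $\ge0$. Two edges of $E_R$ are adjacent if they share a transmitter or a receiver (an edge is adjacent to itself). Packets. $\Pi$ is a finite set of unit-size packets; packet $p$ has weight $w_p>0$, release time $r_p\in\mathbb Z_{\ge1}$, source $s_p$, destination $d_p$. Let $E(p)=\{(t,r)\in E_R: s(t)=s_p,\ d(r)=d_p\}$; assume $E(p)\neq\emptyset$ for all $p$. $\Pi_\ell$ is the set of packets with $(s_p,d_p)\in E_\ell$, and $\ell_p:=d(s_p,d_p)$ for them. Fix a total order $\prec$ on $\Pi$ with $r_p<r_q\Rightarrow p\prec q$. Algorithm ALG. Packets are processed in the order $\prec$; $p$ is processed at time $r_p$, before transmission step $r_p$. A packet assigned to a reconfigurable edge $e$ is split into $d(e)$ chunks of weight $w_p/d(e)$ assigned to $e$; $p(c)$, $w_c$, $e(c)$ denote the packet, weight and edge of chunk $c$. A chunk is pending until transmitted; $W(C)$ is the total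 weight of a set $C$ of chunks. When $p$ is processed, $B(p)$ is the set of pending chunks of packets $p'\prec p$; for $e=(t,r)\in E(p)$, $\mathrm{Adj}(p,e)$ = chunks of $B(p)$ whose edge is adjacent to $e$, $H(p,e)=\{c\in\mathrm{Adj}(p,e):w_c\ge w_p/d(e)\}$, $L(p,e)=\mathrm{Adj}(p,e)\setminus H(p,e)$, and $\mathrm{imp}(p,e)=w_p(d(s_p,t)+\frac{d(e)+1}{2}+d(r,d_p))+w_p|H(p,e)|+d(e)W(L(p,e))$. With $e^*\in\arg\min_{e\in E(p)}\mathrm{imp}(p,e)$: if $p\in\Pi_\ell$ and $w_p\ell_p\le\mathrm{imp}(p,e^* )$, $p$ is sent over its fixed link (latency $w_p\ell_p$); otherwise $p$ is assigned to $e(p):=e^*$ and split into chunks. Scheduler: at each integer $\tau\ge1$, build $M_\tau$ greedily over pending chunks in order of decreasing weight (ties by $\prec$ on packets, then arbitrary), adding $c$ iff no chunk already in $M_\tau$ has an edge adjacent to $e(c)$; chunks of $M_\tau$ are transmitted at step $\tau$. If chunk $c$ of $p$ is transmitted at step $\tau_c$ via $e(p)=(t,r)$, its completion time is $f_c=\tau_c+1+d(s_p,t)+d(r,d_p)$, and $c$ is active at integer times $\tau$ with $r_p\le\tau<f_c$. The cost is $\mathrm{ALG}=\sum_{p\text{ sent on fixed link}}w_p\ell_p+\sum_{\text{chunks }c}w_c(f_c-r_{p(c)})$. Dual assignment: $\alpha_p=w_p\ell_p$ if $p$ is sent over its fixed link, and $\alpha_p=\mathrm{imp}(p,e(p))$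 (computed when $p$ is processed) otherwise; for $t\in T$ and integer $\tau\ge1$, $\beta_{t,\tau}$ is the total weight of chunks active at $\tau$ whose edge has transmitter $t$, and $\beta_{r,\tau}$ ($r\in R$) likewise with receiver $r$. For $\varepsilon>0$ define $$\mathcal D_\varepsilon=\sum_{p\in\Pi}\alpha_p-\frac{1}{2+\varepsilon}\Big(\sum_{t\in T}\sum_{\tau\ge1}\beta_{t,\tau}+\sum_{r\in R}\sum_{\tau\ge1}\beta_{r,\tau}\Big).$$ *)

From mathcomp Require Import all_boot all_order all_algebra.
Set Implicit Arguments. Unset Strict Implicit. Unset Printing Implicit Defensive.
Import Order.TTheory GRing.Theory Num.Theory.
Local Open Scope ring_scope.

(* The network.  S, T, R, D are modelled by four (hence pairwise disjoint)
   finite types Src, Tx, Rx, Dst. *)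
Record network := Network {
  Src : finType; Dst : finType; Tx : finType; Rx : finType;
  srcOf : Tx -> Src;
  dSrc  : Tx -> nat;
  dstOf : Rx -> Dst;
  dDst  : Rx -> nat;
  ER    : {set Tx * Rx};
  dEdge : Tx * Rx -> nat;
  EL    : {set Src * Dst};
  dFix  : Src * Dst -> nat
}.

(* Packets: Pi = 'I_np; the total order "prec" is the order of indices. *)
Record packets (N : network) (R : numDomainType) := Packets {
  np   : nat;
  wt   : 'I_np -> R;
  relt : 'I_np -> nat;
  psrc : 'I_np -> Src N;
  pdst : 'I_np -> Dst N
}.

Section Alg.
Variables (R : realFieldType) (N : network) (P : packets N R).

Notation Ed := (Tx N * Rx N)%type.
Notation Pk := 'I_(np P).

Definition Eset (p : Pk) : {set Ed} :=
  [set e in ER N | (srcOf e.1 == psrc p) && (dstOf e.2 == pdst p)].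

Definition inL (p : Pk) : bool := (psrc p, pdst p) \in EL N.
Definition ell (p : Pk) : nat := dFix (psrc p, pdst p).

Definition adj (e e' : Ed) : bool := (e.1 == e'.1) || (e.2 == e'.2).
Definition adjo (o o' : option Ed) : bool :=
  if o is Some e then (if o' is Some e' then adj e e' else false) else false.

(* The run of ALG is determined by the decisions
   ch p = None (p sent on its fixed link) or ch p = Some e (e(p) = e). *)
Variable ch : Pk -> option Ed.

Definition nchunks (q : Pk) : nat := if ch q is Some e then dEdge e else 0.
Definition cw (q : Pk) : R := if ch q is Some e then wt q / (dEdge e)%:R else 0.

(* Since all chunks of one packet have the same weight and the same edge,
   (pairwise adjacent), at most one chunk of a packet is in M_tau and which
   one is irrelevant; chunks of a packet are thus tracked by their number. *)
Definition chunk_le (q1 q2 : Pk) : bool :=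
  (cw q2 < cw q1) || ((cw q1 == cw q2) && (q1 <= q2)%N).

Definition greedy (cands : seq Pk) : seq Pk :=
  foldl (fun acc q => if has (fun q' => adjo (ch q') (ch q)) acc then acc
                      else rcons acc q) [::] (sort chunk_le cands).

(* packets having a chunk in M_tau, given the pending counts [prev]
   before step tau *)
Definition matching (tau : nat) (prev : Pk -> nat) : seq Pk :=
  greedy [seq q <- enum 'I_(np P) | (relt q <= tau)%N && (0 < prev q)%N].

(* remAfter t q = number of pending chunks of q after transmission steps
   1..t (for released packets assigned to an edge). *)
Fixpoint remAfter (t : nat) : Pk -> nat :=
  match t with
  | 0 => nchunks
  | t'.+1 => let prev := remAfter t' in
             let M := matching t'.+1 prev in
             fun q => if q \in M then (prev q).-1 else prev q
  end.

(* packets one of whose chunks is transmitted at step tau (tau >= 1) *)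
Definition Mset (tau : nat) : seq Pk := matching tau (remAfter tau.-1).

(* pending chunks of q in B(p) when p is processed (before step r_p) *)
Definition pendAt (p q : Pk) : nat :=
  if (q < p)%N then remAfter (relt p).-1 q else 0.

Definition Hcount (p : Pk) (e : Ed) : nat :=
  \sum_(q < np P | adjo (ch q) (Some e) && (wt p / (dEdge e)%:R <= cw q))
     pendAt p q.
Definition WL (p : Pk) (e : Ed) : R :=
  \sum_(q < np P | adjo (ch q) (Some e) && ~~ (wt p / (dEdge e)%:R <= cw q))
     (pendAt p q)%:R * cw q.

Definition imp (p : Pk) (e : Ed) : R :=
  wt p * ((dSrc e.1)%:R + ((dEdge e)%:R + 1) / 2 + (dDst e.2)%:R)
  + wt p * (Hcount p e)%:R + (dEdge e)%:R * WL p e.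

(* ch is the decision sequence produced by ALG (up to the choice of the argmin) *)
Definition alg_run : Prop :=
  forall p : Pk, exists2 estar, estar \in Eset p &
    (forall e, e \in Eset p -> imp p estar <= imp p e) /\
    ch p = (if inL p && (wt p * (ell p)%:R <= imp p estar)
            then None else Some estar).

Definition ftime (q : Pk) (sigma : nat) : nat :=
  if ch q is Some e then (sigma + 1 + dSrc e.1 + dDst e.2)%N else 0%N.

(* A time horizon after which no chunk is pending nor active (every step with
   a pending chunk transmits at least one chunk). *)
Definition horizon : nat :=
  (\max_(p < np P) relt p + \sum_(p < np P) nchunks p
   + \max_(t : Tx N) dSrc t + \max_(r : Rx N) dDst r + 2)%N.

Definition ALG : R :=
  \sum_(p < np P | ch p == None) wt p * (ell p)%:R
  + \sum_(p < np P) \sum_(1 <= sigma < horizon | p \in Mset sigma)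
       cw p * (ftime p sigma - relt p)%:R.

Definition alpha (p : Pk) : R :=
  if ch p is Some e then imp p e else wt p * (ell p)%:R.

Definition activeW (p : Pk) (tau : nat) : R :=
  \sum_(1 <= sigma < horizon | p \in Mset sigma)
     (if (relt p <= tau)%N && (tau < ftime p sigma)%N then cw p else 0).

Definition beta_t (t : Tx N) (tau : nat) : R :=
  \sum_(p < np P | if ch p is Some e then e.1 == t else false) activeW p tau.
Definition beta_r (r : Rx N) (tau : nat) : R :=
  \sum_(p < np P | if ch p is Some e then e.2 == r else false) activeW p tau.

(* D_eps; beta vanishes for tau >= horizon, so the sums over tau >= 1 are
   taken over 1 <= tau < horizon. *)
Definition Dual (eps : R) : R :=
  \sum_(p < np P) alpha p
  - (2 + eps)^-1 * (\sum_(t : Tx N) \sum_(1 <= tau < horizon) beta_t t tau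
                    + \sum_(r : Rx N) \sum_(1 <= tau < horizon) beta_r r tau).

End Alg.

From mathcomp Require Import all_boot all_order all_algebra.
From mathcomp Require Import zify ring lra.
Set Implicit Arguments. Unset Strict Implicit. Unset Printing Implicit Defensive.
Import Order.TTheory GRing.Theory Num.Theory.
Local Open Scope ring_scope.

(* Write ALG = F + C, where F is the cost of packets sent on fixed links and
   C = sum_q sched_cost q the cost of the chunks.  Since alpha_p is w_p l_p
   for fixed-link packets and imp(p, e(p)) otherwise, sum_p alpha_p = F + I
   with I = sum_q imp(q, e(q)).  The theorem then follows from three facts
   by pure arithmetic (primal_dual_ratio):
   - C <= I: the waiting of a pending chunk of q after a step is charged
     either to q itself (chunks of q left when one of them is sent, at most
     w_q (d(e)-1)/2 in total) or to a chunk q' sent at that step which is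
     adjacent and precedes q in the scheduler order; such a q' was pending
     when the later of q, q' was processed and is thus counted in its
     H-term (q' earlier, heavier) or L-term (q earlier, lighter) of imp;
   - sum of beta_t <= C and sum of beta_r <= C: each chunk is active on one
     transmitter and one receiver for exactly f_c - r_p steps. *)

Section GreedySelection.
Variables (T : eqType) (conf : rel T).

Definition greedy_step (acc : seq T) (q : T) : seq T :=
  if has (conf^~ q) acc then acc else rcons acc q.

Lemma greedy_keep (s acc : seq T) x :
  x \in acc -> x \in foldl greedy_step acc s.
Proof.
elim: s acc => [|y s IH] acc //= Hx; apply: IH.
by rewrite /greedy_step; case: ifP => _ //; rewrite mem_rcons in_cons Hx orbT.
Qed.

Lemma greedy_sub (s acc : seq T) x :
  x \in foldl greedy_step acc s -> (x \in acc) || (x \in s).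
Proof.
elim: s acc => [|y s IH] acc /=; first by rewrite orbF.
rewrite in_cons => /IH /orP [|->]; last by rewrite !orbT.
rewrite /greedy_step; case: ifP => _; first by move->.
by rewrite mem_rcons in_cons => /orP [->|->]; rewrite ?orbT.
Qed.

Lemma greedy_blocked (le : rel T) (s acc : seq T) q :
  transitive le -> sorted le s ->
  (forall a, a \in acc -> forall y, y \in s -> le a y) ->
  q \in s -> q \notin foldl greedy_step acc s ->
  exists2 q', q' \in foldl greedy_step acc s & conf q' q && le q' q.
Proof.
move=> le_tr; elim: s acc => [|y s IH] acc //= Hsort Hacc Hq Hn.
have le_y : forall z, z \in s -> le y z.
  by move=> z; apply/allP: z; apply: order_path_min.
have {}Hsort : sorted le s := path_sorted Hsort.
have [Eq|Nq] := eqVneq y q.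
  subst y; move: Hn; rewrite [greedy_step acc q]/greedy_step.
  case: ifP => [/hasP [q' Hq' Hc] _|_]; last first.
    by rewrite greedy_keep // mem_rcons mem_head.
  exists q'; first exact: greedy_keep.
  by rewrite Hc (Hacc _ Hq') // mem_head.
move: Hq; rewrite in_cons eq_sym (negPf Nq) /= => Hq.
apply: IH => // a; rewrite /greedy_step; case: ifP => _ Ha z Hz.
  by apply: Hacc; rewrite ?in_cons ?Hz ?orbT.
move: Ha; rewrite mem_rcons in_cons => /orP [/eqP -> //|Ha]; first exact: le_y.
by apply: Hacc; rewrite ?in_cons ?Hz ?orbT.
Qed.

End GreedySelection.

Section Countdown.
Variables (c : nat -> nat) (m : nat -> bool).
Hypothesis c_step : forall t, c t.+1 = (c t - m t.+1)%N.
Hypothesis m_pos : forall t, m t.+1 -> (0 < c t)%N.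

Lemma countdown_mono s t : (s <= t)%N -> (c t <= c s)%N.
Proof.
move/subnKC <-; elim: (t - s)%N => [|k IH]; first by rewrite addn0.
by rewrite addnS c_step; apply: leq_trans IH; apply: leq_subr.
Qed.

Lemma countdown_count a b : (1 <= a)%N ->
  (\sum_(1 <= tau < b.+1) ((a <= tau)%N && m tau) + c (maxn b a.-1) = c a.-1)%N.
Proof.
move=> Ha; elim: b => [|b IH]; first by rewrite big_geq // add0n max0n.
rewrite big_nat_recr // -IH.
case: (leqP a b.+1) => Hab.
- have -> : maxn b.+1 a.-1 = b.+1 by apply/maxn_idPl; lia.
  have -> : maxn b a.-1 = b by apply/maxn_idPl; lia.
  rewrite c_step /=; case E: (m b.+1); last by rewrite subn0 addn0.
  have := m_pos E; lia.
- have -> : maxn b.+1 a.-1 = a.-1 by apply/maxn_idPr; lia.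
  have -> : maxn b a.-1 = a.-1 by apply/maxn_idPr; lia.
  by rewrite /= addn0.
Qed.

Lemma countdown_count_le a b : (1 <= a)%N ->
  (\sum_(1 <= tau < b) ((a <= tau)%N && m tau) <= c a.-1)%N.
Proof.
move=> Ha; case: b => [|b]; first by rewrite big_geq.
by rewrite -(countdown_count b Ha) leq_addr.
Qed.

Lemma countdown_total b : (\sum_(1 <= tau < b) m tau <= c 0)%N.
Proof.
have -> : (\sum_(1 <= tau < b) m tau
           = \sum_(1 <= tau < b) ((1 <= tau)%N && m tau))%N.
  by apply: eq_big_nat => tau /andP [->].
exact: countdown_count_le.
Qed.

(* The counts left behind at the marks are c 0 - 1, c 0 - 2, ...: twice
   their sum plus c b (c b - 1) is c 0 (c 0 - 1). *)
Lemma countdown_pairs b :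
  (2 * \sum_(1 <= tau < b.+1) m tau * (c tau.-1).-1 + c b * (c b).-1
   = c 0 * (c 0).-1)%N.
Proof.
elim: b => [|b IH]; first by rewrite big_geq.
rewrite big_nat_recr // -IH c_step /=.
case E: (m b.+1); last by rewrite /= mul0n addn0 subn0.
have := m_pos E; case: (c b) => [|[|k]] //= _; lia.
Qed.

Lemma countdown_pairs_le b :
  (2 * \sum_(1 <= tau < b) m tau * (c tau.-1).-1 <= c 0 * (c 0).-1)%N.
Proof.
case: b => [|b]; first by rewrite big_geq.
by rewrite -(countdown_pairs b) leq_addr.
Qed.

(* If marks only occur from step r on, the waiting time of the marks after
   r plus (b + 1 - r) times the leftover equals the counter summed over the
   steps r..b: each unit is counted once per step it is still there. *)
Lemma countdown_waiting r b : (1 <= r)%N -> (forall s, m s -> r <= s)%N ->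
  (\sum_(1 <= s < b.+1) m s * (s - r) + (b.+1 - r) * c b
   = \sum_(1 <= s < b.+1) (r <= s) * c s)%N.
Proof.
move=> Hr m_late; elim: b => [|b IH].
  by rewrite !big_geq // add0n; have -> : (1 - r = 0)%N by lia.
rewrite !(big_nat_recr b.+1) // -IH c_step.
case: (leqP r b.+1) => Hrb.
- case E: (m b.+1); rewrite /=; last by nia.
  have := m_pos E; nia.
- have -> : m b.+1 = false by apply/negP => /m_late; lia.
  have -> : (b.+2 - r = 0)%N by lia.
  have -> : (b.+1 - r = 0)%N by lia.
  by rewrite /= !mul0n !addn0.
Qed.

Lemma countdown_waiting_le r b : (1 <= r)%N -> (forall s, m s -> r <= s)%N ->
  (\sum_(1 <= s < b) m s * (s - r) <= \sum_(1 <= s < b) (r <= s) * c s)%N.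
Proof.
move=> Hr m_late; case: b => [|b]; first by rewrite !big_geq.
by rewrite -(countdown_waiting b Hr m_late) leq_addr.
Qed.

End Countdown.

Lemma sum_window_le (R : numDomainType) (a b r f : nat) (x : R) : 0 <= x ->
  \sum_(a <= tau < b) (if (r <= tau)%N && (tau < f)%N then x else 0)
  <= (minn b f - r)%:R * x.
Proof.
move=> x_ge0; elim: b => [|b IH]; first by rewrite big_geq // mulr_ge0.
case: (leqP a b) => Hab; last by rewrite big_geq // mulr_ge0.
rewrite big_nat_recr //=; case: ifP => [/andP [Hr Hf]|_]; last first.
  rewrite addr0; apply: (le_trans IH); apply: ler_wpM2r => //.
  by rewrite ler_nat; apply: leq_sub2r; rewrite !minnE; lia.
have -> : minn b.+1 f = b.+1 by apply/minn_idPl.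
have E : minn b f = b by apply/minn_idPl; lia.
rewrite E in IH; apply: (le_trans (lerD IH (lexx x))).
by rewrite -[X in _ + X]mul1r -mulrDl natr1 ler_wpM2r // ler_nat; lia.
Qed.

Lemma primal_dual_ratio (R : realFieldType) (F C I Bt Br eps : R) :
  0 < eps -> 0 <= F -> C <= I -> Bt <= C -> Br <= C ->
  F + C <= (2 + eps) / eps * (F + I - (2 + eps)^-1 * (Bt + Br)).
Proof.
move=> eps_gt0 F_ge0 CI BtC BrC.
have -> : (2 + eps) / eps * (F + I - (2 + eps)^-1 * (Bt + Br))
          = ((2 + eps) * (F + I) - (Bt + Br)) / eps.
  by field; apply/andP; split; apply: lt0r_neq0; lra.
rewrite ler_pdivlMr //.
have : 0 <= eps * (I - C) by apply: mulr_ge0; lra.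
have : 0 <= eps * F by apply: mulr_ge0; lra.
lra.
Qed.

Section ScheduleAccounting.
Variables (R : realFieldType) (N : network) (P : packets N R).
Variable ch : 'I_(np P) -> option (Tx N * Rx N)%type.

Notation Pk := 'I_(np P).
Notation pend := (remAfter ch).
Notation M := (Mset ch).
Notation H := (horizon ch).

Lemma chunk_le_trans : transitive (chunk_le ch).
Proof.
move=> y x z; rewrite /chunk_le.
case/orP => [H1|/andP [/eqP E1 H1]] /orP [H2|/andP [/eqP E2 H2]].
- by rewrite (lt_trans H2 H1).
- by rewrite -E2 H1.
- by rewrite E1 H2.
- by rewrite E1 E2 eqxx (leq_trans H1 H2) orbT.
Qed.

Lemma chunk_le_total : total (chunk_le ch).
Proof.
move=> x y; rewrite /chunk_le; case: (ltgtP (cw ch x) (cw ch y)) => //= _.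
exact: leq_total.
Qed.

Lemma pend_step q t : pend t.+1 q = (pend t q - (q \in M t.+1))%N.
Proof. by rewrite /= /Mset; case: (q \in _); rewrite ?subn1 ?subn0. Qed.

Lemma Mset_cand t q : q \in M t -> (relt q <= t)%N && (0 < pend t.-1 q)%N.
Proof.
rewrite /Mset /matching /greedy => /(greedy_sub (s := sort _ _)) /=.
by rewrite mem_sort mem_filter => /andP [].
Qed.

Lemma Mset_pos q t : q \in M t.+1 -> (0 < pend t q)%N.
Proof. by case/Mset_cand/andP. Qed.

Lemma Mset_blocked t q :
  (relt q <= t)%N -> (0 < pend t.-1 q)%N -> q \notin M t ->
  exists2 q', q' \in M t & adjo (ch q') (ch q) && chunk_le ch q' q.
Proof.
move=> q_rel q_pend; rewrite /Mset /matching /greedy => q_out.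
apply: (greedy_blocked (conf := fun q' q => adjo (ch q') (ch q))
                       chunk_le_trans _ _ _ q_out) => //.
- exact: (sort_sorted chunk_le_total).
- by rewrite mem_sort mem_filter q_rel q_pend mem_enum.
Qed.

Lemma pend_mono q s t : (s <= t)%N -> (pend t q <= pend s q)%N.
Proof.
exact: (@countdown_mono (pend^~ q) (fun t => q \in M t) (pend_step q)).
Qed.

Lemma pend_le_nchunks q t : (pend t q <= nchunks ch q)%N.
Proof. exact: (pend_mono q (leq0n t)). Qed.

Lemma sent_from_le q a b : (1 <= a)%N ->
  (\sum_(1 <= tau < b) ((a <= tau)%N && (q \in M tau)) <= pend a.-1 q)%N.
Proof. exact: (@countdown_count_le (pend^~ q) (fun t => q \in M t)
                      (pend_step q) (@Mset_pos q)). Qed.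

Lemma sent_le_nchunks q b :
  (\sum_(1 <= tau < b) (q \in M tau) <= nchunks ch q)%N.
Proof. exact: (@countdown_total (pend^~ q) (fun t => q \in M t)
                      (pend_step q) (@Mset_pos q)). Qed.

Hypothesis hdE : forall e, e \in ER N -> (1 <= dEdge e)%N.
Hypothesis hw : forall p : Pk, 0 < wt p.
Hypothesis hr : forall p : Pk, (1 <= relt p)%N.
Hypothesis hrun : alg_run ch.

Lemma routed_delay_pos q e : ch q = Some e -> (1 <= dEdge e)%N.
Proof.
move=> Hq; have [es es_in [_]] := hrun q; rewrite Hq.
case: ifP => // _ [->]; apply: hdE.
by move: es_in; rewrite inE => /andP [].
Qed.

Lemma cw_ge0 q : 0 <= cw ch q.
Proof.
by rewrite /cw; case: (ch q) => // e; apply: divr_ge0; [apply: ltW|].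
Qed.

Lemma cw_mul_delay q e : ch q = Some e -> cw ch q * (dEdge e)%:R = wt q.
Proof.
move=> Hq; rewrite /cw Hq mulfVK // pnatr_eq0 -lt0n.
exact: routed_delay_pos Hq.
Qed.

Definition sched_cost (q : Pk) : R :=
  \sum_(1 <= s < H | q \in M s) cw ch q * (ftime ch q s - relt q)%:R.

Definition wait (q : Pk) : nat :=
  \sum_(1 <= tau < H) (relt q <= tau) * pend tau q.

Definition route_cost (q : Pk) : R :=
  if ch q is Some e then wt q * (1 + dSrc e.1 + dDst e.2)%:R else 0.

(* A chunk of q sent at step s costs w_q/d(e) (1 + d(s_q,t) + d(r,d_q) +
   (s - r_q)); over the d(e) chunks the first part gives route_cost q and
   the waiting parts s - r_q add up to at most wait q. *)
Lemma sched_cost_le q : sched_cost q <= route_cost q + cw ch q * (wait q)%:R.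
Proof.
rewrite /sched_cost /route_cost; case Hq: (ch q) => [e|]; last first.
  by rewrite /cw Hq mul0r add0r big1 // => s _; rewrite mul0r.
set d := (1 + dSrc e.1 + dDst e.2)%N.
have -> : \sum_(1 <= s < H | q \in M s) cw ch q * (ftime ch q s - relt q)%:R
          = cw ch q * (\sum_(1 <= s < H) (q \in M s) * (d + (s - relt q)))%:R.
  rewrite natr_sum mulr_sumr big_mkcond /=; apply: eq_bigr => s _.
  case E: (q \in M s); last by rewrite /= mul0n mulr0.
  move/Mset_cand: E => /andP [q_rel _].
  by rewrite /ftime Hq mul1n; congr (_ * _%:R); lia.
have sent_late : (\sum_(1 <= s < H) (q \in M s) * (s - relt q) <= wait q)%N.
  apply: (@countdown_waiting_le (pend^~ q) (fun t => q \in M t) (pend_step q)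
                                (@Mset_pos q)) => // s.
  by case/Mset_cand/andP.
have sent : (\sum_(1 <= s < H) (q \in M s) <= dEdge e)%N.
  by have := sent_le_nchunks q H; rewrite /nchunks Hq.
apply: (@le_trans _ _ (cw ch q * (dEdge e * d + wait q)%:R)).
  rewrite ler_wpM2l ?cw_ge0 // ler_nat.
  under eq_bigr do rewrite mulnDr.
  by rewrite big_split /= -big_distrl /= leq_add // leq_mul.
by rewrite natrD mulrDr natrM mulrA (cw_mul_delay Hq).
Qed.

Definition blocks (tau : nat) (q' q : Pk) : bool :=
  [&& q' \in M tau, adjo (ch q') (ch q), chunk_le ch q' q, q' != q
    & (relt q <= tau)%N].

(* The pending chunks of q after step tau are either the ones left when q
   was served, or chunks of q charged to a blocker served at tau. *)
Lemma wait_step_charged q tau : (1 <= tau)%N ->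
  cw ch q * ((relt q <= tau) * pend tau q)%:R
  <= cw ch q * ((q \in M tau) * (pend tau.-1 q).-1)%:R
     + \sum_(q' | blocks tau q' q) cw ch q * (pend tau.-1 q)%:R.
Proof.
case: tau => [|t] // _; rewrite -[t.+1.-1]/t.
have charges_ge0 : 0 <= \sum_(q' | blocks t.+1 q' q) cw ch q * (pend t q)%:R.
  by apply: sumr_ge0 => q' _; rewrite mulr_ge0 ?cw_ge0.
case: (leqP (relt q) t.+1) => [q_rel|_]; last first.
  by rewrite mul0n mulr0 addr_ge0 // mulr_ge0 ?cw_ge0.
rewrite mul1n pend_step.
case q_sent: (q \in M t.+1); first by rewrite subn1 mul1n lerDl.
rewrite subn0 mul0n mulr0 add0r.
have [pend0|pend_pos] := posnP (pend t q).
  by move: charges_ge0; rewrite pend0 mulr0n mulr0.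
have [q' q'_sent /andP [q'_adj q'_le]] :=
  Mset_blocked q_rel pend_pos (negbT q_sent).
rewrite (bigD1 q') /=.
  by rewrite lerDl; apply: sumr_ge0 => *; rewrite mulr_ge0 ?cw_ge0.
rewrite /blocks q'_sent q'_adj q'_le q_rel andbT /=.
by apply: contraFN q_sent => /eqP <-.
Qed.

Definition block_charge (q' q : Pk) : R :=
  \sum_(1 <= tau < H | blocks tau q' q) cw ch q * (pend tau.-1 q)%:R.

(* Contribution of q' to the H-term w_q |H(q, e(q))| of imp(q, e(q)). *)
Definition heavy_charge (q q' : Pk) : R :=
  if ch q is Some e then
    (if adjo (ch q') (Some e) && (wt q / (dEdge e)%:R <= cw ch q')
     then wt q * (pendAt ch q q')%:R else 0) else 0.

(* Contribution of q to the L-term d(e') W(L(q', e')) of imp(q', e(q')). *)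
Definition light_charge (q' q : Pk) : R :=
  if ch q' is Some e then
    (if adjo (ch q) (Some e) && ~~ (wt q' / (dEdge e)%:R <= cw ch q)
     then (dEdge e)%:R * ((pendAt ch q' q)%:R * cw ch q) else 0) else 0.

Lemma heavy_charge_ge0 q q' : 0 <= heavy_charge q q'.
Proof.
rewrite /heavy_charge; case: (ch q) => // e; case: ifP => // _.
by apply: mulr_ge0 => //; apply: ltW.
Qed.

Lemma light_charge_ge0 q' q : 0 <= light_charge q' q.
Proof.
rewrite /light_charge; case: (ch q') => // e; case: ifP => // _.
by rewrite !mulr_ge0 ?cw_ge0.
Qed.

Lemma adj_sym (e e' : Tx N * Rx N) : adj e e' = adj e' e.
Proof. by rewrite /adj eq_sym [e.2 == _]eq_sym. Qed.

(* A blocker q' processed before q is at least as heavy, hence in H(q, e);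
   it is served at most (pending chunks of q' at r_q) times from r_q on. *)
Lemma block_charge_earlier q' q e' e :
  ch q' = Some e' -> ch q = Some e -> adj e' e -> chunk_le ch q' q ->
  (q' < q)%N -> block_charge q' q <= heavy_charge q q'.
Proof.
move=> Hq' Hq adj_e le_q'q lt_q'q.
have heavy : heavy_charge q q' = wt q * (pend (relt q).-1 q')%:R.
  have cw_le : cw ch q <= cw ch q'.
    by case/orP: le_q'q => [/ltW //|/andP [/eqP -> _]].
  have cwq : wt q / (dEdge e)%:R = cw ch q by rewrite /cw Hq.
  by rewrite /heavy_charge Hq Hq' /= adj_e cwq cw_le /pendAt lt_q'q.
rewrite heavy /block_charge.
apply: (@le_trans _ _ (\sum_(1 <= tau < H)
          wt q * (nat_of_bool ((relt q <= tau)%N && (q' \in M tau)))%:R)).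
  rewrite big_mkcond /=; apply: ler_sum_nat => tau _.
  case: ifP => [/and5P [-> _ _ _ ->]|_]; last first.
    by apply: mulr_ge0 => //; apply: ltW.
  rewrite mulr1 -(cw_mul_delay Hq) ler_wpM2l ?cw_ge0 // ler_nat.
  by have := pend_le_nchunks q tau.-1; rewrite /nchunks Hq.
by rewrite -mulr_sumr -natr_sum ler_pM2l // ler_nat sent_from_le.
Qed.

(* If q was processed before its blocker q', q is strictly lighter, hence
   in L(q', e'); while q' is served, q has at most its pending chunks at
   r_q', and q' is served at most d(e') times. *)
Lemma block_charge_later q' q e' e :
  ch q' = Some e' -> ch q = Some e -> adj e' e -> chunk_le ch q' q ->
  (q < q')%N -> block_charge q' q <= light_charge q' q.
Proof.
move=> Hq' Hq adj_e le_q'q lt_qq'.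
have light : light_charge q' q
              = (dEdge e')%:R * ((pend (relt q').-1 q)%:R * cw ch q).
  have cw_lt : cw ch q < cw ch q'.
    by case/orP: le_q'q => // /andP [_ ?]; lia.
  have cwq' : wt q' / (dEdge e')%:R = cw ch q' by rewrite /cw Hq'.
  rewrite /light_charge Hq' Hq /= adj_sym adj_e cwq' -ltNge cw_lt.
  by rewrite /pendAt lt_qq'.
rewrite light /block_charge.
apply: (@le_trans _ _ (\sum_(1 <= tau < H)
          (nat_of_bool (q' \in M tau))%:R
          * (cw ch q * (pend (relt q').-1 q)%:R))).
  rewrite big_mkcond /=; apply: ler_sum_nat => tau _.
  case: ifP => [/and5P [q'_sent _ _ _ _]|_]; last first.
    by rewrite mulr_ge0 // mulr_ge0 ?cw_ge0.
  rewrite q'_sent mul1r ler_wpM2l ?cw_ge0 // ler_nat pend_mono //.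
  by case/Mset_cand/andP: q'_sent => q'_rel _; lia.
rewrite -mulr_suml -natr_sum [_ * cw ch q]mulrC ler_wpM2r ?mulr_ge0 ?cw_ge0 //.
by rewrite ler_nat; have := sent_le_nchunks q' H; rewrite /nchunks Hq'.
Qed.

Lemma block_charge_le q' q :
  block_charge q' q <= heavy_charge q q' + light_charge q' q.
Proof.
have charges_ge0 := addr_ge0 (heavy_charge_ge0 q q') (light_charge_ge0 q' q).
case Hb: (adjo (ch q') (ch q) && chunk_le ch q' q && (q' != q)); last first.
  rewrite /block_charge big1 // => tau /and5P [_ adj_q le_q neq_q _].
  by move: Hb; rewrite adj_q le_q neq_q.
case/andP: Hb => [/andP [adj_q le_q] neq_q].
case Hq': (ch q') adj_q => [e'|] //; case Hq: (ch q) => [e|] //= adj_e.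
case: (ltngtP q' q) => [lt_q'q|lt_qq'|/val_inj eq_q];
  last by rewrite eq_q eqxx in neq_q.
- apply: (le_trans (block_charge_earlier Hq' Hq adj_e le_q lt_q'q)).
  by rewrite lerDl light_charge_ge0.
- apply: (le_trans (block_charge_later Hq' Hq adj_e le_q lt_qq')).
  by rewrite lerDr heavy_charge_ge0.
Qed.

Lemma sum_heavy_charge q : \sum_(q' < np P) heavy_charge q q' =
  (if ch q is Some e then wt q * (Hcount ch q e)%:R else 0).
Proof.
rewrite /heavy_charge /Hcount; case: (ch q) => [e|]; last by rewrite big1.
rewrite natr_sum mulr_sumr [RHS]big_mkcond /=.
by apply: eq_bigr => q' _; case: ifP.
Qed.

Lemma sum_light_charge q' : \sum_(q < np P) light_charge q' q =
  (if ch q' is Some e then (dEdge e)%:R * WL ch q' e else 0).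
Proof.
rewrite /light_charge /WL; case: (ch q') => [e|]; last by rewrite big1.
rewrite mulr_sumr [RHS]big_mkcond /=.
by apply: eq_bigr => q _; case: ifP.
Qed.

Definition self_wait (q : Pk) : nat :=
  \sum_(1 <= tau < H) (q \in M tau) * (pend tau.-1 q).-1.

Definition self_bound (q : Pk) : R :=
  if ch q is Some e then wt q * ((dEdge e)%:R - 1) / 2 else 0.

(* They amount to (d-1) + (d-2) + ... + 0 = d(d-1)/2 chunks of weight w_q/d. *)
Lemma self_wait_le q : cw ch q * (self_wait q)%:R <= self_bound q.
Proof.
rewrite /self_bound; case Hq: (ch q) => [e|]; last by rewrite /cw Hq mul0r.
have d_pos := routed_delay_pos Hq.
have pairs : (2 * self_wait q <= dEdge e * (dEdge e).-1)%N.
  have := @countdown_pairs_le (pend^~ q) (fun t => q \in M t) (pend_step q)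
                              (@Mset_pos q) H.
  by rewrite /= /nchunks Hq.
have pairsR : (self_wait q)%:R <= (dEdge e)%:R * ((dEdge e)%:R - 1) / 2 :> R.
  rewrite ler_pdivlMr // mulrC -natrM -(@natrB _ _ 1) // -natrM ler_nat.
  by rewrite subn1.
apply: (le_trans (ler_wpM2l (cw_ge0 q) pairsR)).
by rewrite !mulrA (cw_mul_delay Hq).
Qed.

Lemma wait_le q : cw ch q * (wait q)%:R
  <= self_bound q + \sum_(q' < np P) (heavy_charge q q' + light_charge q' q).
Proof.
rewrite /wait natr_sum mulr_sumr.
apply: (le_trans (ler_sum_nat (fun tau tau_in =>
          wait_step_charged q (proj1 (andP tau_in))))).
rewrite big_split /= -mulr_sumr -natr_sum -/(self_wait q) lerD ?self_wait_le //.
rewrite (eq_bigr (fun tau => \sum_(q' < np P)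
           if blocks tau q' q then cw ch q * (pend tau.-1 q)%:R else 0));
  last by move=> tau _; rewrite big_mkcond.
rewrite exchange_big /=; apply: ler_sum => q' _.
by rewrite -big_mkcond block_charge_le.
Qed.

(* C <= I: route cost, self waiting and the charges collected in the H- and
   L-terms of q add up to exactly imp(q, e(q)). *)
Lemma sched_cost_le_imp : \sum_(q < np P) sched_cost q
  <= \sum_(q < np P) (if ch q is Some e then imp ch q e else 0).
Proof.
apply: (@le_trans _ _ (\sum_(q < np P) (route_cost q + (self_bound q
          + \sum_(q' < np P) (heavy_charge q q' + light_charge q' q))))).
  apply: ler_sum => q _; apply: (le_trans (sched_cost_le q)).
  by rewrite lerD2l wait_le.
under eq_bigr do rewrite big_split /= !addrA.
rewrite big_split /= [X in _ + X <= _]exchange_big -big_split /=.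
apply: ler_sum => q _; rewrite sum_heavy_charge sum_light_charge.
rewrite /route_cost /self_bound /imp.
case: (ch q) => [e|]; last by rewrite !addr0.
by rewrite le_eqVlt; apply/orP; left; apply/eqP; rewrite !natrD; field.
Qed.

(* A chunk is active during the f_c - r_p steps it is paid for. *)
Lemma active_le_sched_cost p :
  \sum_(1 <= tau < H) activeW ch p tau <= sched_cost p.
Proof.
rewrite /activeW /sched_cost exchange_big /=; apply: ler_sum => s _.
apply: (le_trans (sum_window_le 1 H (relt p) (ftime ch p s) (cw_ge0 p))).
by rewrite mulrC ler_wpM2l ?cw_ge0 // ler_nat leq_sub2r // geq_minr.
Qed.

(* Grouping active chunks by an endpoint f of their edge (transmitter or
   receiver) counts each chunk once: the beta sums are at most C. *)
Lemma beta_sum_le (K : finType) (f : Tx N * Rx N -> K) :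
  \sum_(k : K) \sum_(1 <= tau < H)
     \sum_(p < np P | if ch p is Some e then f e == k else false)
        activeW ch p tau
  <= \sum_(p < np P) sched_cost p.
Proof.
under eq_bigr do rewrite exchange_big /=.
under eq_bigr do rewrite big_mkcond /=.
rewrite exchange_big /=; apply: ler_sum => p _.
have cost_ge0 : 0 <= sched_cost p.
  by apply: sumr_ge0 => s _; rewrite mulr_ge0 ?cw_ge0.
case: (ch p) => [e|]; last by rewrite big1.
by rewrite -big_mkcond (big_pred1 (f e)) ?active_le_sched_cost.
Qed.

Lemma sum_alpha : \sum_(p < np P) alpha ch p
  = \sum_(p < np P | ch p == None) wt p * (ell p)%:R
    + \sum_(q < np P) (if ch q is Some e then imp ch q e else 0).
Proof.
rewrite [X in _ = X + _]big_mkcond -big_split /=; apply: eq_bigr => p _.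
by rewrite /alpha; case: (ch p) => [e|] /=; rewrite ?add0r ?addr0.
Qed.

End ScheduleAccounting.

(* ALG ch is F + sum_q sched_cost q by definition. *)
Theorem mainTheorem4 (R : realFieldType) (N : network) (P : packets N R)
  (ch : 'I_(np P) -> option (Tx N * Rx N)%type) (eps : R)
  (hdE : forall e, e \in ER N -> (1 <= dEdge e)%N)
  (hw : forall p : 'I_(np P), 0 < wt p)
  (hr : forall p : 'I_(np P), (1 <= relt p)%N)
  (hE : forall p : 'I_(np P), exists e, e \in @Eset R N P p)
  (hord : forall p q : 'I_(np P), (relt p < relt q)%N -> (p < q)%N)
  (hrun : alg_run ch)
  (heps : 0 < eps) :
  ALG ch <= (2 + eps) / eps * Dual ch eps.
Proof.
rewrite /Dual sum_alpha.
apply: primal_dual_ratio => //.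
- by apply: sumr_ge0 => p _; rewrite mulr_ge0 // ltW.
- exact: sched_cost_le_imp hdE hw hr hrun.
- exact: (beta_sum_le ch hw fst).
- exact: (beta_sum_le ch hw snd).
Qed.
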